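(* Let $k\ge 1$, $l_0,l_1,\dots,l_k$ and $m_1,\dots,m_k$ be non-negative integers with $l_0>0$, $l_i\ge m_i$ for all $1\le i\le k$, and $l'>m'>0$, where $l'=\sum_{i=1}^k l_i$ and $m'=\sum_{i=1}^k m_i$. For a meromorphic function $f$ put $$P[f]=f^{l_0}(f^{l_1})^{(m_1)}(f^{l_2})^{(m_2)}\cdots (f^{l_k})^{(m_k)}.$$ Let $\omega\not\equiv 0$ be a polynomial of degree $m<l_0$, and let $f$ be a non-constant rational function whose poles, if any, all have multiplicity at least $l_0$. Then $P[f]-\omega$ has at least two distinct zeros in $\mathbb{C}$. *)

(* Complex numbers are modelled as R[i] = complex R for an
   arbitrary R : realType; rational functions as pairs (numerator, denominator)
   of polynomials over R[i]. *)
From HB Require Import structures.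
From mathcomp Require Import all_boot all_order all_algebra.
From mathcomp Require Import reals complex.
Set Implicit Arguments. Unset Strict Implicit. Unset Printing Implicit Defensive.
Import Order.TTheory GRing.Theory Num.Theory.
Local Open Scope ring_scope.

Section RatFun.
Variable F : fieldType.

(* A rational function is represented by a pair (a, b) meaning a / b, b <> 0. *)
Definition rmul (x y : {poly F} * {poly F}) : {poly F} * {poly F} :=
  (x.1 * y.1, x.2 * y.2).

Definition rexp (x : {poly F} * {poly F}) (n : nat) : {poly F} * {poly F} :=
  (x.1 ^+ n, x.2 ^+ n).

(* quotient rule: (a/b)' = (a' b - a b') / b^2 *)
Definition rderiv (x : {poly F} * {poly F}) : {poly F} * {poly F} :=
  (x.1^`() * x.2 - x.1 * x.2^`(), x.2 ^+ 2).

Definition rderivn (n : nat) (x : {poly F} * {poly F}) := iter n rderiv x.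

Definition rsubpoly (x : {poly F} * {poly F}) (w : {poly F}) :=
  (x.1 - w * x.2, x.2).

(* the rational function a/b (b <> 0) has a zero at z: it is regular at z
   with value 0, i.e. a/b = a'/b' with b'(z) <> 0 and a'(z) = 0. *)
Definition rzero_at (x : {poly F} * {poly F}) (z : F) : Prop :=
  exists a' b' : {poly F}, x.1 * b' = a' * x.2 /\ b'.[z] != 0 /\ a'.[z] = 0.

Definition Pdiff (k : nat) (l0 : nat) (l m : nat -> nat)
  (f : {poly F} * {poly F}) : {poly F} * {poly F} :=
  rmul (rexp f l0)
    (\big[rmul/(1, 1)]_(1 <= i < k.+1) rderivn (m i) (rexp f (l i))).

End RatFun.

From mathcomp Require Import all_boot all_order all_algebra.
From mathcomp Require Import reals complex.
From mathcomp Require Import ring zify.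
From Stdlib Require Import Classical_Prop.
Set Implicit Arguments. Unset Strict Implicit. Unset Printing Implicit Defensive.
Import Order.TTheory GRing.Theory Num.Theory.
Local Open Scope ring_scope.

(* Write f = p/q, n = l0 + l' and s = size w, so that deg w = s - 1 < l0.  Orders of
   rational functions at points are read off from multiplicities: at a pole of f of
   order mu >= l0, P[f] has a pole of order n mu + m', and at a zero of f of order mu
   it vanishes to order at least n mu - m' > s.  Differentiation lowers every nonzero
   order by one, keeps regular points regular and lowers the degree.  Put
   Phi = P[f] - w and Psi = Phi^(s) = P[f]^(s).
   Suppose Phi vanishes at no point other than z0.  The degree of a nonzero rational
   function is the sum of its orders over all points; comparing these sums for Phi and
   Psi gives deg p <= s T <= l0 T <= deg q, with T the number of poles of f.  Hence
   deg P[f] < 0 and deg Phi = deg w, which fixes the order of Phi at z0 and forces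
   p(z0) != 0; the sum of the orders of Psi then exceeds deg P[f] - s >= deg Psi. *)

Section Multiplicity.
Variable F : fieldType.
Implicit Types (a c : {poly F}) (z : F).

Lemma mup_XsubC_factor a z : a != 0 ->
  exists2 a1, ~~ root a1 z & a = a1 * ('X - z%:P) ^+ mup z a.
Proof.
move=> a0; have [n [a1 /implyP/(_ a0) a1z Ea]] := multiplicity_XsubC a z.
by exists a1 => //; rewrite {2}Ea mupMr // mup_XsubCX eqxx.
Qed.

Lemma mup_lt_size a z : a != 0 -> (mup z a < size a)%N.
Proof.
move=> a0; have [a1 a1z Ea] := mup_XsubC_factor z a0.
have a10 : a1 != 0 by apply: contraNneq a1z => ->; rewrite root0.
rewrite [in X in (_ < X)%N]Ea size_mul ?expf_neq0 ?polyXsubC_eq0 //.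
rewrite size_exp_XsubC addnS /=; move: a10; rewrite -size_poly_gt0.
by move: (size a1) (mup z a) => *; lia.
Qed.

Lemma mup_gt0 a z : a != 0 -> root a z -> (0 < mup z a)%N.
Proof. by move=> a0 az; rewrite -XsubC_dvd // dvdp_XsubCl. Qed.

Lemma mupN a z : mup z (- a) = mup z a.
Proof. by rewrite -mulN1r mupMr // rootN root1. Qed.

Lemma mupX a z n : a != 0 -> mup z (a ^+ n) = (mup z a * n)%N.
Proof.
move=> a0; elim: n => [|n IHn]; first by rewrite muln0 mupNroot ?root1.
by rewrite exprS mupM ?expf_neq0 // IHn mulnS.
Qed.

Lemma mupD_ltl a c z : a != 0 -> c != 0 -> (mup z a < mup z c)%N ->
  mup z (a + c) = mup z a.
Proof.
move=> a0 c0 ac.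
have dvd_c n : (n <= mup z c)%N -> ('X - z%:P) ^+ n %| c by rewrite mup_geq.
have ac0 : a + c != 0.
  by apply: contraTneq ac => /eqP; rewrite addr_eq0 => /eqP->; rewrite mupN ltnn.
apply/eqP; rewrite eqn_leq mup_leq // (dvdp_addl _ (dvd_c _ ac)) -mup_ltn // ltnSn.
by rewrite mup_geq // dvdp_add ?dvd_c 1?ltnW // -mup_geq.
Qed.

Lemma mup_XsubCX_mul c z n : c != 0 -> mup z (('X - z%:P) ^+ n * c) = (n + mup z c)%N.
Proof. by move=> c0; rewrite mupM ?expf_neq0 ?polyXsubC_eq0 // mup_XsubCX eqxx. Qed.

Lemma mup_XsubC_mul c z : c != 0 -> mup z (('X - z%:P) * c) = (mup z c).+1.
Proof. by move=> c0; rewrite -[X in X * c]expr1 mup_XsubCX_mul. Qed.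

Lemma scale_const_poly a c : size a = 1%N -> size c = 1%N -> exists k, a = k *: c.
Proof.
move=> /eqP/size_poly1P[x _ ->] /eqP/size_poly1P[y y0 ->].
by exists (x / y); rewrite -mul_polyC -polyCM mulfVK.
Qed.

End Multiplicity.

Lemma sum_count_mem (T : eqType) (S r : seq T) : uniq S -> {subset r <= S} ->
  (\sum_(z <- S) count_mem z r)%N = size r.
Proof.
move=> uS; elim: r => [|x r IHr] rS /=; first by rewrite big1.
rewrite big_split /= IHr => [|y ry]; last by rewrite rS // inE ry orbT.
rewrite -big_mkcond sum1_count.
by rewrite (eq_count (a2 := pred1 x)) => [|y]; rewrite ?count_uniq_mem ?rS ?mem_head // eq_sym.
Qed.

Lemma sum_mup (F : closedFieldType) (a : {poly F}) (S : seq F) :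
  a != 0 -> uniq S -> (forall z, root a z -> z \in S) ->
  (size a).-1 = (\sum_(z <- S) mup z a)%N.
Proof.
move=> a0 uS aS; have [r Ea] := closed_field_poly_normal a.
have la0 : lead_coef a != 0 by rewrite lead_coef_eq0.
have mupE z : mup z a = count_mem z r.
  by rewrite Ea -mul_polyC mupMr ?mu_prod_XsubC // rootC.
rewrite (eq_bigr _ (fun z _ => mupE z)) sum_count_mem // => [|z rz].
  by rewrite Ea size_scale // size_prod_XsubC.
by apply: aS; rewrite Ea rootZ // root_prod_XsubC.
Qed.

Lemma XsubC_mul_rderiv_num (R : comNzRingType) (a1 b1 : {poly R}) (z : R) (i j : nat) :
  let a := a1 * ('X - z%:P) ^+ i in let b := b1 * ('X - z%:P) ^+ j in
  ('X - z%:P) * (a^`() * b - a * b^`()) = ('X - z%:P) ^+ (i + j) *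
    ((i%:R - j%:R) * (a1 * b1) + ('X - z%:P) * (a1^`() * b1 - a1 * b1^`())).
Proof.
set Xz := 'X - z%:P.
have XzderivM c n : Xz * (c * Xz ^+ n)^`() = Xz ^+ n * (Xz * c^`() + c * n%:R).
  rewrite derivM deriv_exp derivXsubC mul1r -mulr_natr.
  by case: n => [|n]; rewrite ?mulr0 ?expr0 ?exprS /=; ring.
move=> a b; have -> : Xz * (a^`() * b - a * b^`()) = (Xz * a^`()) * b - a * (Xz * b^`()).
  by ring.
rewrite !XzderivM /a /b exprD; ring.
Qed.

(* [a^`() * b - a * b^`()] is the numerator of [(a / b)^`()]; characteristic 0 makes
   [i%:R - j%:R] nonzero for [i != j] in [XsubC_mul_rderiv_num]. *)
Section RderivNum.
Variable F : numFieldType.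
Variables (a b : {poly F}) (z : F).
Hypotheses (a0 : a != 0) (b0 : b != 0).
Let N := a^`() * b - a * b^`().

Lemma mup_rderiv_num_neq : mup z a != mup z b -> N != 0 /\ (mup z N).+1 = (mup z a + mup z b)%N.
Proof.
move=> ab; have [a1 a1z Ea] := mup_XsubC_factor z a0.
have [b1 b1z Eb] := mup_XsubC_factor z b0.
have := XsubC_mul_rderiv_num a1 b1 z (mup z a) (mup z b); rewrite /= -Ea -Eb -/N.
set c := (_ * (a1 * b1) + _) => EN.
have cz : c.[z] != 0.
  rewrite !(hornerE, hornerMn) subrr mul0r addr0 !mulf_neq0 //.
  by rewrite subr_eq0 eqr_nat.
have c0 : c != 0 by apply: contraNneq cz => ->; rewrite horner0.
have N0 : N != 0.
  apply: contraNneq c0 => N0; move: EN; rewrite N0 mulr0 => /esym/eqP.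
  by rewrite mulf_eq0 expf_eq0 polyXsubC_eq0 andbF.
by split => //; rewrite -(mup_XsubC_mul z N0) EN (mup_XsubCX_mul _ _ c0) (mupNroot cz) addn0.
Qed.

Lemma mup_rderiv_num_eq : mup z a = mup z b -> N != 0 -> (mup z a + mup z b <= mup z N)%N.
Proof.
move=> ab N0; have [a1 a1z Ea] := mup_XsubC_factor z a0.
have [b1 b1z Eb] := mup_XsubC_factor z b0.
have := XsubC_mul_rderiv_num a1 b1 z (mup z a) (mup z b); rewrite /= -Ea -Eb -/N.
rewrite ab subrr mul0r add0r => EN.
set c := (a1^`() * b1 - _) in EN; have c0 : c != 0.
  by apply: contra_neq N0 => c0; apply: (mulfI (negbT (polyXsubC_eq0 z))); rewrite EN c0 !mulr0.
rewrite -ltnS -(mup_XsubC_mul z N0) EN mup_XsubCX_mul ?mulf_neq0 ?polyXsubC_eq0 //.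
by rewrite (mup_XsubC_mul _ c0) addnS ltnS leq_addr.
Qed.

End RderivNum.

Section RatFunValuation.
Variable F : fieldType.
Implicit Types (w : {poly F}) (x y : {poly F} * {poly F}) (z : F).

(* Order at [z] (negative at a pole) and degree of the rational function [x.1 / x.2]. *)
Definition rval z x : int := (mup z x.1)%:Z - (mup z x.2)%:Z.
Definition rdeg x : int := (size x.1)%:Z - (size x.2)%:Z.
Definition rnonzero x := (x.1 != 0) && (x.2 != 0).

Lemma rnonzero_rmul x y : rnonzero x -> rnonzero y -> rnonzero (rmul x y).
Proof. by case/andP=> ? ? /andP[? ?]; rewrite /rnonzero !mulf_neq0. Qed.

Lemma rval_rmul x y z : rnonzero x -> rnonzero y -> rval z (rmul x y) = rval z x + rval z y.
Proof.
case/andP=> ? ? /andP[? ?]; rewrite /rval !mupM //.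
by move: (mup z x.1) (mup z x.2) (mup z y.1) (mup z y.2) => *; lia.
Qed.

Lemma rdeg_rmul x y : rnonzero x -> rnonzero y -> rdeg (rmul x y) = rdeg x + rdeg y.
Proof.
case/andP=> a0 b0 /andP[c0 d0]; rewrite /rdeg !size_mul //.
move: a0 b0 c0 d0; rewrite -!size_poly_gt0.
by move: (size x.1) (size x.2) (size y.1) (size y.2) => *; lia.
Qed.

Lemma rnonzero_rexp x n : rnonzero x -> rnonzero (rexp x n).
Proof. by case/andP=> ? ?; rewrite /rnonzero !expf_neq0. Qed.

Lemma rval_rexp x n z : rnonzero x -> rval z (rexp x n) = n%:Z * rval z x.
Proof.
case/andP=> ? ?; rewrite /rval !mupX //.
by move: (mup z x.1) (mup z x.2) => *; lia.
Qed.

Lemma rdeg_rexp x n : rnonzero x -> rdeg (rexp x n) = n%:Z * rdeg x.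
Proof.
case/andP=> a0 b0; rewrite /rdeg /=.
have s1 := size_exp x.1 n; have s2 := size_exp x.2 n.
have t1 : (0 < size (x.1 ^+ n))%N by rewrite size_poly_gt0 expf_neq0.
have t2 : (0 < size (x.2 ^+ n))%N by rewrite size_poly_gt0 expf_neq0.
move: a0 b0 s1 s2 t1 t2; rewrite -!size_poly_gt0.
by move: (size (x.1 ^+ n)) (size (x.2 ^+ n)) (size x.1) (size x.2) => *; nia.
Qed.

Lemma rnonzero_big_rmul (I : eqType) (r : seq I) (G : I -> {poly F} * {poly F}) :
  (forall i, i \in r -> rnonzero (G i)) -> rnonzero (\big[@rmul F/(1, 1)]_(i <- r) G i).
Proof.
move=> Gnz; rewrite big_seq; apply: (big_ind rnonzero) => //; last exact: rnonzero_rmul.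
by rewrite /rnonzero oner_eq0.
Qed.

Lemma rval_big_rmul (I : eqType) (r : seq I) (G : I -> {poly F} * {poly F}) z :
  (forall i, i \in r -> rnonzero (G i)) ->
  rval z (\big[@rmul F/(1, 1)]_(i <- r) G i) = \sum_(i <- r) rval z (G i).
Proof.
elim: r => [|i r IHr] Gnz; first by rewrite !big_nil /rval subrr.
have Grnz j : j \in r -> rnonzero (G j) by move=> jr; rewrite Gnz // inE jr orbT.
rewrite !big_cons rval_rmul ?IHr ?Gnz ?mem_head //.
exact: rnonzero_big_rmul.
Qed.

Lemma rdeg_big_rmul (I : eqType) (r : seq I) (G : I -> {poly F} * {poly F}) :
  (forall i, i \in r -> rnonzero (G i)) ->
  rdeg (\big[@rmul F/(1, 1)]_(i <- r) G i) = \sum_(i <- r) rdeg (G i).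
Proof.
elim: r => [|i r IHr] Gnz; first by rewrite !big_nil /rdeg subrr.
have Grnz j : j \in r -> rnonzero (G j) by move=> jr; rewrite Gnz // inE jr orbT.
rewrite !big_cons rdeg_rmul ?IHr ?Gnz ?mem_head //.
exact: rnonzero_big_rmul.
Qed.

Lemma rzero_at_rval x z : rnonzero x -> 0 < rval z x -> rzero_at x z.
Proof.
case/andP=> a0 b0 vx.
have [a1 a1z Ea] := mup_XsubC_factor z a0; have [b1 b1z Eb] := mup_XsubC_factor z b0.
have lt_ba : (mup z x.2 < mup z x.1)%N.
  by move: vx; rewrite /rval; move: (mup z x.1) (mup z x.2) => *; lia.
set i := mup z x.1 in Ea lt_ba *; set j := mup z x.2 in Eb lt_ba *.
exists (a1 * ('X - z%:P) ^+ (i - j)), b1; split; last split => //.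
  by rewrite [in LHS]Ea [in RHS]Eb -[in LHS](subnK (ltnW lt_ba)) exprD -!mulrA [_ ^+ j * _]mulrC.
by rewrite hornerM horner_exp !hornerE subrr expr0n subn_eq0 leqNgt lt_ba mulr0.
Qed.

Lemma rzero_at_num0 x z : x.1 = 0 -> rzero_at x z.
Proof. by move=> x0; exists 0, 1; rewrite x0 !mul0r !hornerE oner_eq0. Qed.

Lemma rnonzero_rderivW x : rnonzero (rderiv x) -> rnonzero x.
Proof.
case/andP; rewrite /= expf_eq0 /= => N0 b0; rewrite /rnonzero b0 andbT.
by apply: contraNneq N0 => ->; rewrite deriv0 !mul0r subrr.
Qed.

Lemma rderivnS n x : rderivn n.+1 x = rderiv (rderivn n x).
Proof. exact: iterS. Qed.

Lemma rderivn_den n x : (rderivn n x).2 = x.2 ^+ (2 ^ n).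
Proof. by elim: n => [|n IHn]; rewrite ?expr1 // rderivnS /= IHn -exprM expnSr. Qed.

Lemma root_rderivn_den n x z : root (rderivn n x).2 z = root x.2 z.
Proof. by rewrite rderivn_den /root horner_exp expf_eq0 expn_gt0. Qed.

Lemma rnonzero_rderivnW j n x : (j <= n)%N -> rnonzero (rderivn n x) -> rnonzero (rderivn j x).
Proof.
move=> /subnK <-; elim: (n - j)%N => [|i IHi] // nz.
by apply: IHi; apply: rnonzero_rderivW; rewrite -rderivnS.
Qed.

Lemma size_rderiv_num x : rnonzero x ->
  (size (rderiv x).1 <= (size x.1 + size x.2).-2)%N.
Proof.
case/andP=> a0 b0; have da := lt_size_deriv a0; have db := lt_size_deriv b0.
apply: leq_trans (size_polyD _ _) _; rewrite size_polyN geq_max.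
have := size_polyMleq x.1^`() x.2; have := size_polyMleq x.1 x.2^`().
move: da db; move: (size x.1) (size x.2) (size x.1^`()) (size x.2^`()).
by move: (size (x.1^`() * x.2)) (size (x.1 * x.2^`())) => *; apply/andP; split; lia.
Qed.

Lemma rdeg_rderiv x : rnonzero (rderiv x) -> rdeg (rderiv x) <= rdeg x - 1.
Proof.
move=> nzd; have nzx := rnonzero_rderivW nzd; have /andP[a0 b0] := nzx.
have := size_rderiv_num nzx; case/andP: nzd; rewrite -size_poly_gt0 => N0 _.
rewrite /rdeg /= expr2 size_mul //; move: N0 b0; rewrite -size_poly_gt0.
by move: (size (rderiv x).1) (size x.1) (size x.2) => *; lia.
Qed.

Lemma rdeg_rderivn n x : rnonzero (rderivn n x) -> rdeg (rderivn n x) <= rdeg x - n%:Z.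
Proof.
elim: n => [|n IHn] nzd; first by rewrite subr0.
have := IHn (rnonzero_rderivnW (leqnSn n) nzd); rewrite rderivnS in nzd *.
have := rdeg_rderiv nzd.
by move: (rdeg _) (rdeg (rderivn n x)) (rdeg x) => *; lia.
Qed.

Lemma rderivn_rsubpoly n x w :
  rderivn n (rsubpoly x w) = rsubpoly (rderivn n x) w^`(n).
Proof.
elim: n => [|n IHn] //; rewrite !rderivnS IHn derivnS.
by rewrite /rderiv /rsubpoly /=; congr (_, _); rewrite derivB derivM; ring.
Qed.

Lemma rval_rsubpoly_lt0 x w z : rnonzero x -> w != 0 -> rval z x < 0 ->
  rval z (rsubpoly x w) = rval z x.
Proof.
case/andP=> a0 b0 w0 vx; rewrite /rval /= mupD_ltl ?oppr_eq0 ?mulf_neq0 //.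
rewrite mupN mupM //; move: vx; rewrite /rval.
by move: (mup z x.1) (mup z x.2) (mup z w) => *; lia.
Qed.

Lemma rval_rsubpoly_gt x w z : rnonzero x -> w != 0 -> (mup z w)%:Z < rval z x ->
  rval z (rsubpoly x w) = (mup z w)%:Z.
Proof.
case/andP=> a0 b0 w0 vx; rewrite /rval /= [x.1 - _]addrC mupD_ltl ?oppr_eq0 ?mulf_neq0 //.
  by rewrite mupN mupM //; move: (mup z x.2) (mup z w) => *; lia.
rewrite mupN mupM //; move: vx; rewrite /rval.
by move: (mup z x.1) (mup z x.2) (mup z w) => *; lia.
Qed.

Lemma rdeg_rsubpoly x w : rnonzero x -> w != 0 -> rdeg x < (size w).-1 ->
  rdeg (rsubpoly x w) = (size w).-1.
Proof.
case/andP=> a0 b0 w0; rewrite /rdeg /= [x.1 - _]addrC => dx.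
rewrite size_polyDl size_polyN size_mul //; move: w0 b0 dx; rewrite -!size_poly_gt0.
  by move: (size w) (size x.2) (size x.1) => *; lia.
by move: (size w) (size x.2) (size x.1) => *; lia.
Qed.

End RatFunValuation.

Section DerivativeValuation.
Variable F : numFieldType.
Implicit Types (x : {poly F} * {poly F}) (z : F).

Lemma rval_rderiv_eq x z : rnonzero x -> rval z x != 0 ->
  rnonzero (rderiv x) /\ rval z (rderiv x) = rval z x - 1.
Proof.
case/andP=> a0 b0 v0.
have ab : mup z x.1 != mup z x.2 by apply: contraNneq v0 => e; rewrite /rval e subrr.
have [N0 EN] := mup_rderiv_num_neq a0 b0 ab.
split; first by rewrite /rnonzero N0 expf_neq0.
rewrite /rval /= mupX //; move: EN.
by move: (mup z x.1) (mup z x.2) (mup z (x.1^`() * x.2 - x.1 * x.2^`())) => *; lia.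
Qed.

Lemma rval_rderiv_ge x z : rnonzero (rderiv x) ->
  rval z x - 1 <= rval z (rderiv x) /\ (0 <= rval z x -> 0 <= rval z (rderiv x)).
Proof.
move=> nzd; have /andP[a0 b0] := rnonzero_rderivW nzd; case/andP: nzd => N0 _.
rewrite /rval /= mupX //.
have [ab|ab] := eqVneq (mup z x.1) (mup z x.2).
  have := mup_rderiv_num_eq a0 b0 ab N0; rewrite ab.
  by move: (mup z x.2) (mup z (x.1^`() * x.2 - x.1 * x.2^`())) => *; lia.
have [_ EN] := mup_rderiv_num_neq a0 b0 ab; move: EN ab; rewrite neq_ltn.
by move: (mup z x.1) (mup z x.2) (mup z (x.1^`() * x.2 - x.1 * x.2^`())) => *; lia.
Qed.

Lemma rval_rderivn_eq n x z : rnonzero x -> (rval z x < 0 \/ n%:Z <= rval z x) ->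
  rnonzero (rderivn n x) /\ rval z (rderivn n x) = rval z x - n%:Z.
Proof.
move=> nzx; elim: n => [|n IHn] vx; first by rewrite subr0.
have [nzn vn] : rnonzero (rderivn n x) /\ rval z (rderivn n x) = rval z x - n%:Z.
  by apply: IHn; move: vx; move: (rval z x) => *; lia.
have vn0 : rval z (rderivn n x) != 0.
  by rewrite vn; move: vx; move: (rval z x) => *; apply/eqP; lia.
have [nzd ->] := rval_rderiv_eq nzn vn0; rewrite rderivnS vn; split => //.
by move: (rval z x) => *; lia.
Qed.

Lemma rval_rderivn_ge n x z : rnonzero (rderivn n x) ->
  rval z x - n%:Z <= rval z (rderivn n x) /\ (0 <= rval z x -> 0 <= rval z (rderivn n x)).
Proof.
elim: n => [|n IHn] nzd; first by rewrite subr0.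
have [IH1 IH2] := IHn (rnonzero_rderivnW (leqnSn n) nzd); rewrite rderivnS in nzd *.
have [D1 D2] := rval_rderiv_ge z nzd; split; last by move=> /IH2/D2.
by move: IH1 D1; move: (rval z x) (rval z (rderivn n x)) (rval z (rderiv _)) => *; lia.
Qed.

Lemma rval_rderivn_rexp x z (j l : nat) :
  rnonzero x -> rval z x != 0 -> (j <= l)%N ->
  rnonzero (rderivn j (rexp x l)) /\ rval z (rderivn j (rexp x l)) = l%:Z * rval z x - j%:Z.
Proof.
move=> nzx vx jl; rewrite -(rval_rexp l z nzx).
apply: rval_rderivn_eq; first exact: rnonzero_rexp.
rewrite rval_rexp //; move: vx jl; move: (rval z x) => v.
by rewrite neq_lt => /orP[] v0 jl; nia.
Qed.

End DerivativeValuation.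

Lemma rdeg_sum_rval (F : closedFieldType) (x : {poly F} * {poly F}) (S : seq F) :
  rnonzero x -> uniq S -> (forall z, root (x.1 * x.2) z -> z \in S) ->
  rdeg x = \sum_(z <- S) rval z x.
Proof.
case/andP=> a0 b0 uS xS.
have e1 : (size x.1).-1 = (\sum_(z <- S) mup z x.1)%N.
  by apply: sum_mup => // z xz; apply: xS; rewrite rootM xz.
have e2 : (size x.2).-1 = (\sum_(z <- S) mup z x.2)%N.
  by apply: sum_mup => // z xz; apply: xS; rewrite rootM xz orbT.
rewrite /rdeg /rval sumrB -!raddf_sum /= -e1 -e2.
move: a0 b0; rewrite -!size_poly_gt0.
by move: (size x.1) (size x.2) => *; lia.
Qed.

Section DifferentialMonomial.
Variable F : numFieldType.
Variables p q : {poly F}.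
Hypotheses (p0 : p != 0) (q0 : q != 0) (pq_coprime : coprimep p q).
Hypothesis pq_root : exists z, root (p * q) z.
Let f := (p, q).

Let rnonzero_f : rnonzero f. Proof. by rewrite /rnonzero p0 q0. Qed.

Lemma pole_nonroot z : root q z -> ~~ root p z.
Proof. by apply: coprimep_root; rewrite coprimep_sym. Qed.

Lemma rval_frac_pole z : root q z -> rval z f = - (mup z q)%:Z.
Proof. by move=> qz; rewrite /rval /= mupNroot ?sub0r ?pole_nonroot. Qed.

Lemma rval_frac_nonpole z : ~~ root q z -> rval z f = (mup z p)%:Z.
Proof. by move=> qz; rewrite /rval /= (mupNroot qz) subr0. Qed.

Lemma rnonzero_rderivn_rexp j l : (j <= l)%N -> rnonzero (rderivn j (rexp f l)).
Proof.
move=> jl; have [z] := pq_root; rewrite rootM => pqz.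
suff vz : rval z f != 0 by have [] := rval_rderivn_rexp rnonzero_f vz jl.
have [qz|qz] := boolP (root q z); first by rewrite rval_frac_pole // oppr_eq0 -lt0n mup_gt0.
by rewrite rval_frac_nonpole // -lt0n mup_gt0 //; move: pqz; rewrite (negbTE qz) orbF.
Qed.

Lemma rval_rderivn_rexp_pole z j l : root q z -> (j <= l)%N ->
  rval z (rderivn j (rexp f l)) = - (l * mup z q + j)%N%:Z.
Proof.
move=> qz jl; have vz : rval z f != 0.
  by rewrite rval_frac_pole // oppr_eq0 -lt0n mup_gt0.
have [_ ->] := rval_rderivn_rexp rnonzero_f vz jl; rewrite rval_frac_pole //.
by move: (mup z q) => *; lia.
Qed.

Lemma rval_rderivn_rexp_nonpole z j l : ~~ root q z -> (j <= l)%N ->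
  0 <= rval z (rderivn j (rexp f l)) /\ (l * mup z p)%N%:Z - j%:Z <= rval z (rderivn j (rexp f l)).
Proof.
move=> qz jl; have [D1 D2] := rval_rderivn_ge z (rnonzero_rderivn_rexp jl).
rewrite rval_rexp // rval_frac_nonpole // in D1 D2; split; first by apply: D2.
by move: D1; move: (mup z p) (rval z _) => *; lia.
Qed.

Lemma rdeg_rderivn_rexp j l : (j <= l)%N ->
  rdeg (rderivn j (rexp f l)) <= l%:Z * rdeg f - j%:Z.
Proof. by move=> jl; rewrite -rdeg_rexp //; apply/rdeg_rderivn/rnonzero_rderivn_rexp. Qed.

Lemma root_rderivn_rexp_den z j l : root (rderivn j (rexp f l)).2 z -> root q z.
Proof. by rewrite root_rderivn_den /= /root horner_exp expf_eq0 => /andP[]. Qed.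

Variables (k l0 : nat) (l m : nat -> nat).
Hypothesis m_le_l : forall j, (1 <= j <= k)%N -> (m j <= l j)%N.
Let n := (l0 + \sum_(1 <= i < k.+1) l i)%N.
Let M := (\sum_(1 <= i < k.+1) m i)%N.
Let u := Pdiff k l0 l m f.
Let D i := rderivn (m i) (rexp f (l i)).

Let m_le_l_iota i : (1 <= i < k.+1)%N -> (m i <= l i)%N.
Proof. by rewrite ltnS => /m_le_l. Qed.

Let rnonzero_D i : i \in index_iota 1 k.+1 -> rnonzero (D i).
Proof. by rewrite mem_index_iota => /m_le_l_iota; apply: rnonzero_rderivn_rexp. Qed.

Lemma rnonzero_Pdiff : rnonzero u.
Proof. exact/rnonzero_rmul/rnonzero_big_rmul/rnonzero_D/rnonzero_rexp. Qed.

Lemma root_Pdiff_den z : root u.2 z -> root q z.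
Proof.
rewrite /u /Pdiff /= rootM /root horner_exp expf_eq0 => /orP[/andP[] //|].
elim: (index_iota 1 k.+1) => [|i r IHr]; first by rewrite big_nil /= hornerC oner_eq0.
by rewrite big_cons /= hornerM mulf_eq0 => /orP[/root_rderivn_rexp_den|/IHr].
Qed.

Lemma rval_Pdiff z : rval z u = l0%:Z * rval z f + \sum_(1 <= i < k.+1) rval z (D i).
Proof.
by rewrite /u /Pdiff rval_rmul ?rval_rexp ?rval_big_rmul ?rnonzero_rexp ?rnonzero_big_rmul.
Qed.

Lemma rval_Pdiff_pole z : root q z -> rval z u = - (mup z q * n + M)%N%:Z.
Proof.
move=> qz; rewrite rval_Pdiff rval_frac_pole //.
rewrite (eq_big_nat _ _ (fun i ri => rval_rderivn_rexp_pole qz (m_le_l_iota ri))).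
rewrite sumrN -raddf_sum big_split /= -big_distrl /= /n /M.
by move: (mup z q) (\sum_(1 <= i < k.+1) l i)%N (\sum_(1 <= i < k.+1) m i)%N => *; lia.
Qed.

Lemma rval_Pdiff_nonpole z : ~~ root q z ->
  0 <= rval z u /\ (mup z p * n)%N%:Z - M%:Z <= rval z u.
Proof.
move=> qz; rewrite rval_Pdiff rval_frac_nonpole //.
have D_ge i : (1 <= i < k.+1)%N ->
    0 <= rval z (D i) /\ (l i * mup z p)%N%:Z - (m i)%:Z <= rval z (D i).
  by move=> /m_le_l_iota; apply: rval_rderivn_rexp_nonpole.
split; first by apply: addr_ge0; last by rewrite big_nat sumr_ge0 // => i /D_ge[].
have := ler_sum_nat (fun i ri => (D_ge i ri).2).
rewrite sumrB -!raddf_sum -big_distrl /= /n /M.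
move: (mup z p) (\sum_(1 <= i < k.+1) l i)%N (\sum_(1 <= i < k.+1) m i)%N.
by move: (\sum_(i <- _) rval z (D i)) => *; nia.
Qed.

Lemma rdeg_Pdiff : rdeg u <= n%:Z * rdeg f - M%:Z.
Proof.
rewrite /u /Pdiff rdeg_rmul ?rdeg_rexp ?rdeg_big_rmul ?rnonzero_rexp ?rnonzero_big_rmul //.
have := ler_sum_nat (fun i ri => rdeg_rderivn_rexp (m_le_l_iota ri)).
have -> : \sum_(1 <= i < k.+1) ((l i)%:Z * rdeg f - (m i)%:Z) =
    (\sum_(1 <= i < k.+1) l i)%N%:Z * rdeg f - M%:Z.
  by rewrite sumrB -mulr_suml -!raddf_sum.
rewrite /n /M.
move: (rdeg f) (\sum_(1 <= i < k.+1) l i)%N (\sum_(1 <= i < k.+1) m i)%N.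
by move: (\sum_(i <- _) rdeg (D i)) => *; nia.
Qed.

End DifferentialMonomial.

(* [nia] on the goal alone: the context of the section below holds many arithmetic
   facts that only slow it down. *)
Local Ltac goal_nia := repeat match goal with H : _ |- _ => clear H end; intros; nia.

Section Counting.
Variable F : numClosedFieldType.
Variables (k l0 : nat) (l m : nat -> nat) (w p q : {poly F}).
Hypotheses (l0_gt0 : (0 < l0)%N) (m_le_l : forall j, (1 <= j <= k)%N -> (m j <= l j)%N).
Hypotheses (M_gt0 : (0 < \sum_(1 <= j < k.+1) m j)%N)
  (M_lt_L : (\sum_(1 <= j < k.+1) m j < \sum_(1 <= j < k.+1) l j)%N).
Hypotheses (w0 : w != 0) (deg_w : ((size w).-1 < l0)%N).
Hypotheses (q0 : q != 0) (pq_coprime : coprimep p q) (nonconst : ~ exists c, p = c *: q).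
Hypothesis pole_mult : forall z, root q z -> ('X - z%:P) ^+ l0 %| q.

Let p0 : p != 0.
Proof. by apply: contra_not_neq nonconst => p_eq0; exists 0; rewrite p_eq0 scale0r. Qed.

Let pq_root : exists z, root (p * q) z.
Proof.
apply/closed_rootP; apply: contra_not_neq nonconst; rewrite size_mul // => pq1.
have := p0; have := q0; rewrite -!size_poly_gt0 => q_gt0 p_gt0.
by apply: scale_const_poly; move: pq1 p_gt0 q_gt0; move: (size p) (size q) => *; lia.
Qed.

Let n := (l0 + \sum_(1 <= i < k.+1) l i)%N.
Let M := (\sum_(1 <= i < k.+1) m i)%N.
Let s := size w.
Let u := Pdiff k l0 l m (p, q).
Let Phi := rsubpoly u w.
Let Psi := rderivn s u.

Let s_le_l0 : (s <= l0)%N. Proof. by rewrite /s (polySpred w0). Qed.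

Let s_M_lt_n : (s + M < n)%N.
Proof.
have := s_le_l0; rewrite /n /s /M; move: M_lt_L.
by move: (size w) (\sum_(1 <= i < _) l i)%N => *; lia.
Qed.

Let rnonzero_u : rnonzero u. Proof. by apply: rnonzero_Pdiff. Qed.

Let rval_u_pole z : root q z -> rval z u = - (mup z q * n + M)%N%:Z.
Proof. by apply: rval_Pdiff_pole. Qed.

Let rval_u_pole_lt0 z : root q z -> rval z u < 0.
Proof.
move=> qz; rewrite rval_u_pole //.
by move: M_gt0; rewrite -/M; move: (mup z q * n)%N => *; lia.
Qed.

Let rval_u_nonpole z : ~~ root q z -> 0 <= rval z u /\ (mup z p * n)%N%:Z - M%:Z <= rval z u.
Proof. by apply: rval_Pdiff_nonpole. Qed.

Let rdeg_u : rdeg u <= n%:Z * rdeg (p, q) - M%:Z.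
Proof. by apply: rdeg_Pdiff. Qed.

Let mup_u_den z : ~~ root q z -> mup z u.2 = 0%N.
Proof. by move=> qz; apply: mupNroot; apply: contra qz; apply: root_Pdiff_den. Qed.

Hypothesis Phi_num_neq0 : Phi.1 != 0.

Lemma rnonzero_Pdiff_sub : rnonzero Phi.
Proof. by rewrite /rnonzero Phi_num_neq0; case/andP: rnonzero_u. Qed.

Let rval_Phi_pole z : root q z -> rval z Phi = rval z u.
Proof.
by move=> qz; apply: rval_rsubpoly_lt0 => //; apply: rval_u_pole_lt0.
Qed.

Let rval_Phi_nonpole z : ~~ root q z -> 0 <= rval z Phi.
Proof. by move=> qz; rewrite /rval mup_u_den. Qed.

Let rval_Phi_root_p z : ~~ root q z -> root p z -> rval z Phi < s%:Z.
Proof.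
move=> qz pz; rewrite /Phi rval_rsubpoly_gt // ?ltz_nat ?mup_lt_size //.
have [_] := rval_u_nonpole qz; have := mup_gt0 p0 pz; have := mup_lt_size z w0.
move: s_M_lt_n; rewrite /s; move: (size w) (mup z w) (mup z p) (rval z u) => *; nia.
Qed.

Let Phi_derivn : rderivn s Phi = Psi.
Proof.
rewrite /Phi rderivn_rsubpoly derivn_poly0 ?leqnn // /rsubpoly mul0r subr0.
by rewrite /Psi; case: (rderivn s u).
Qed.

Let rnonzero_Psi : rnonzero Psi.
Proof.
have [z] := pq_root; rewrite rootM => /orP[pz|qz].
  have qz := coprimep_root pq_coprime pz.
  apply: (proj1 (rval_rderivn_eq (n := s) (z := z) rnonzero_u _)); right.
  have [_] := rval_u_nonpole qz; have := mup_gt0 p0 pz.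
  by move: s_M_lt_n; move: (mup z p) (rval z u) => *; nia.
by apply: (proj1 (rval_rderivn_eq (n := s) (z := z) rnonzero_u _)); left; apply: rval_u_pole_lt0.
Qed.

Let rval_Psi_pole z : root q z -> rval z Psi = rval z u - s%:Z.
Proof.
by move=> qz; apply: (proj2 (rval_rderivn_eq rnonzero_u _)); left; apply: rval_u_pole_lt0.
Qed.

Let rval_Psi_nonpole z : ~~ root q z -> (mup z p * (n - M - s))%N%:Z <= rval z Psi.
Proof.
move=> qz; have [D1 D2] := rval_rderivn_ge z rnonzero_Psi.
have [U1 U2] := rval_u_nonpole qz; have {D2 U1} := D2 U1; move: D1 U2 s_M_lt_n.
by move: (rval z Psi) (rval z u); case: (mup z p) => [|?] *; nia.
Qed.

Let rval_Psi_Phi z : rval z Phi - s%:Z <= rval z Psi.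
Proof.
by have [] := rval_rderivn_ge (n := s) z (x := Phi); rewrite Phi_derivn.
Qed.

Let rdeg_Psi_Phi : rdeg Psi <= rdeg Phi - s%:Z.
Proof. by have := rdeg_rderivn (n := s) (x := Phi); rewrite Phi_derivn; apply. Qed.

Let rdeg_Psi_u : rdeg Psi <= rdeg u - s%:Z.
Proof. exact: rdeg_rderivn. Qed.

Section OneZero.
Variable z0 : F.
Hypotheses (z0_nonpole : ~~ root q z0) (Phi_le0 : forall z, z != z0 -> rval z Phi <= 0).

Let S := undup (z0 :: sval (closed_field_poly_normal (p * q * Phi.1 * Psi.1))).
Let T := (\sum_(z <- S) root q z)%N.

Let uniq_S : uniq S. Proof. exact: undup_uniq. Qed.

Let S_roots z : root (p * q * Phi.1 * Psi.1) z -> z \in S.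
Proof.
rewrite /S mem_undup inE; case: closed_field_poly_normal => /= r Er pz.
have Psi0 : Psi.1 != 0 by case/andP: rnonzero_Psi.
by move: pz; rewrite {1}Er rootZ ?lead_coef_eq0 ?mulf_neq0 // root_prod_XsubC => ->; rewrite orbT.
Qed.

Let sum_mup_p : (size p).-1 = (\sum_(z <- S) mup z p)%N.
Proof. by apply: sum_mup => // z pz; apply: S_roots; rewrite !rootM pz. Qed.

Let sum_mup_q : (size q).-1 = (\sum_(z <- S) mup z q)%N.
Proof. by apply: sum_mup => // z qz; apply: S_roots; rewrite !rootM qz orbT. Qed.

Let rdeg_Phi_sum : rdeg Phi = \sum_(z <- S) rval z Phi.
Proof.
apply: rdeg_sum_rval rnonzero_Pdiff_sub _ _ => // z.
rewrite rootM => /orP[Phiz|/root_Pdiff_den qz].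
  by apply: S_roots; rewrite !rootM Phiz !orbT.
by apply: S_roots; rewrite !rootM qz orbT.
Qed.

Let rdeg_Psi_sum : rdeg Psi = \sum_(z <- S) rval z Psi.
Proof.
apply: rdeg_sum_rval => // z.
rewrite rootM root_rderivn_den => /orP[Psiz|/root_Pdiff_den qz].
  by apply: S_roots; rewrite !rootM Psiz !orbT.
by apply: S_roots; rewrite !rootM qz orbT.
Qed.

(* The multiplicity at [z] of the divisor c1 (p) + c2 (q) + c3 supp(q) + c4 z0. *)
Let divisor (c1 c2 c3 c4 : int) z : int :=
  c1 * (mup z p)%:Z + c2 * (mup z q)%:Z + c3 * (root q z : nat)%:Z + c4 * (z0 == z : nat)%:Z.

Let deg_divisor c1 c2 c3 c4 : \sum_(z <- S) divisor c1 c2 c3 c4 z =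
  c1 * (size p).-1%:Z + c2 * (size q).-1%:Z + c3 * T%:Z + c4.
Proof.
have sum_z0 : (\sum_(z <- S) (z0 == z))%N = 1%N.
  rewrite -big_mkcond sum1_count (eq_count (a2 := pred1 z0)) => [|z]; last exact: eq_sym.
  by rewrite count_uniq_mem // mem_undup mem_head.
by rewrite !big_split /= -!mulr_sumr -!raddf_sum -sum_mup_p -sum_mup_q sum_z0 mulr1.
Qed.

Let poles_le_q : (l0 * T <= (size q).-1)%N.
Proof.
rewrite sum_mup_q big_distrr; apply: leq_sum => z _.
by case qz : (root q z); rewrite /= ?muln0 // muln1 mup_geq ?pole_mult.
Qed.

Let q_le_poles : ((size q).-1 <= size q * T)%N.
Proof.
rewrite sum_mup_q big_distrr; apply: leq_sum => z _.
case qz : (root q z); last by rewrite mupNroot ?qz.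
by rewrite /= muln1; apply/ltnW/mup_lt_size.
Qed.

Let mup_p_pole z : root q z -> mup z p = 0%N.
Proof. by move=> qz; apply/mupNroot/(pole_nonroot pq_coprime). Qed.

Let pole_neq_z0 z : root q z -> (z0 == z) = false.
Proof. by move=> qz; apply: contraNF z0_nonpole => /eqP->. Qed.

Let rval_Phi_eq0 z : ~~ root q z -> z0 != z -> rval z Phi = 0.
Proof.
by move=> qz z0z; apply/eqP; rewrite eq_le rval_Phi_nonpole // Phi_le0 // eq_sym.
Qed.

Let deg_p_le_poles : ((size p).-1 <= s * T)%N.
Proof.
have pt z : divisor 1 0 (- s%:Z) (- s%:Z) z + rval z Phi <= rval z Psi.
  rewrite /divisor; case qz : (root q z).
    rewrite pole_neq_z0 // (mup_p_pole qz) rval_Psi_pole // rval_Phi_pole //.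
    by move: (rval z u); goal_nia.
  move/negbT: qz => qz; have [ez|z0z] := eqVneq z0 z; last first.
    rewrite rval_Phi_eq0 //; have := rval_Psi_nonpole qz; move: s_M_lt_n.
    by move: (mup z p) (rval z Psi); goal_nia.
  rewrite -{}ez in qz *; have [pz|pz] := boolP (root p z0); last first.
    by rewrite mupNroot //; have := rval_Psi_Phi z0; move: (rval z0 Phi) (rval z0 Psi); goal_nia.
  have := rval_Psi_nonpole qz; have := rval_Phi_root_p qz pz; have := mup_gt0 p0 pz.
  by move: s_M_lt_n; move: (mup z0 p) (rval z0 Phi) (rval z0 Psi); goal_nia.
have: \sum_(z <- S) (divisor 1 0 (- s%:Z) (- s%:Z) z + rval z Phi) <= \sum_(z <- S) rval z Psi.
  by apply: ler_sum => z _; apply: pt.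
rewrite big_split /= deg_divisor -rdeg_Phi_sum -rdeg_Psi_sum.
by have := rdeg_Psi_Phi; move: (rdeg Phi) (rdeg Psi) (size p).-1; goal_nia.
Qed.

Let poles_exist : (0 < T)%N.
Proof.
rewrite lt0n; apply/negP => /eqP T0; apply: nonconst.
have := deg_p_le_poles; have := q_le_poles; rewrite T0 !muln0 !leqn0.
rewrite -!subn1 !subn_eq0 => q1 p1; apply: scale_const_poly; apply/eqP.
  by rewrite eqn_leq p1 size_poly_gt0.
by rewrite eqn_leq q1 size_poly_gt0.
Qed.

Let deg_p_le_deg_q : ((size p).-1 <= (size q).-1)%N.
Proof.
apply: leq_trans deg_p_le_poles _; apply: leq_trans poles_le_q.
by rewrite leq_mul2r s_le_l0 orbT.
Qed.

Let rdeg_Phi : rdeg Phi = s.-1%:Z.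
Proof.
apply: rdeg_rsubpoly => //; apply: le_lt_trans rdeg_u _.
have := deg_p_le_deg_q; rewrite /rdeg /=; move: M_gt0 p0 q0; rewrite -!size_poly_gt0 -/M.
by move: (size p) (size q); goal_nia.
Qed.

Let rval_Phi_z0 : rval z0 Phi = s.-1%:Z + n%:Z * (size q).-1%:Z + M%:Z * T%:Z.
Proof.
have pt z : rval z Phi = divisor 0 (- n%:Z) (- M%:Z) (rval z0 Phi) z.
  rewrite /divisor; case qz : (root q z).
    rewrite pole_neq_z0 // rval_Phi_pole // rval_u_pole //.
    by move: (mup z p) (mup z q); goal_nia.
  move/negbT: qz => qz; rewrite (mupNroot qz); have [->|z0z] := eqVneq z0 z.
    by move: (mup z p) (rval z Phi); goal_nia.
  by rewrite rval_Phi_eq0 //; move: (mup z p); goal_nia.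
have := rdeg_Phi_sum; rewrite (eq_bigr _ (fun z _ => pt z)) deg_divisor rdeg_Phi.
by move: (rval z0 Phi) (mup z0 p); goal_nia.
Qed.

Let z0_nonroot_p : ~~ root p z0.
Proof.
apply/negP => pz; have := rval_Phi_root_p z0_nonpole pz; rewrite rval_Phi_z0.
have := poles_le_q; have := poles_exist; have := l0_gt0; have := w0; rewrite -size_poly_gt0 /s /n.
by move: (size w) (size q).-1 T (\sum_(1 <= i < k.+1) l i)%N M; goal_nia.
Qed.

Lemma Pdiff_sub_single_zero_contra : False.
Proof.
have pt z : divisor (n - M - s)%N%:Z (- n%:Z) (- (M + s)%N%:Z) (rval z0 Phi - s%:Z) z <= rval z Psi.
  rewrite /divisor; case qz : (root q z).
    rewrite pole_neq_z0 // (mup_p_pole qz) rval_Psi_pole // rval_u_pole //.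
    by move: (mup z q); goal_nia.
  move/negbT: qz => qz; rewrite (mupNroot qz); have [ez|z0z] := eqVneq z0 z.
    rewrite -{}ez (mupNroot z0_nonroot_p); have := rval_Psi_Phi z0.
    by move: (rval z0 Phi) (rval z0 Psi); goal_nia.
  by have := rval_Psi_nonpole qz; move: (mup z p) (rval z Psi); goal_nia.
have: \sum_(z <- S) divisor (n - M - s)%N%:Z (- n%:Z) (- (M + s)%N%:Z) (rval z0 Phi - s%:Z) z
    <= \sum_(z <- S) rval z Psi by apply: ler_sum => z _; apply: pt.
rewrite deg_divisor -rdeg_Psi_sum rval_Phi_z0.
have := rdeg_Psi_u; have := rdeg_u; have := deg_p_le_deg_q; have := poles_le_q; have := s_le_l0.
have := s_M_lt_n; have := M_gt0; have := p0; have := q0; rewrite -!size_poly_gt0 /rdeg /s /n /M /=.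
move: (size w) (size p) (size q) (\sum_(1 <= i < k.+1) l i)%N (\sum_(1 <= i < k.+1) m i)%N T.
by move: (rdeg Psi) (rdeg u); goal_nia.
Qed.

End OneZero.

Lemma Pdiff_sub_two_zeros : exists z1 z2, [/\ z1 != z2, 0 < rval z1 Phi & 0 < rval z2 Phi].
Proof.
have [//|no_two] := classic (exists z1 z2, [/\ z1 != z2, 0 < rval z1 Phi & 0 < rval z2 Phi]).
exfalso; have [[z1 z1_zero]|no_zero] := classic (exists z, 0 < rval z Phi).
  apply: (@Pdiff_sub_single_zero_contra z1).
    by apply/negP => qz; move: z1_zero; rewrite rval_Phi_pole // ltNge ltW ?rval_u_pole_lt0.
  by move=> z zz1; rewrite leNgt; apply/negP => z_zero; apply: no_two; exists z, z1.
have [z0 z0_nonpole] := closed_nonrootP q q0; apply: (Pdiff_sub_single_zero_contra z0_nonpole).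
by move=> z _; rewrite leNgt; apply/negP => z_zero; apply: no_zero; exists z.
Qed.

End Counting.

Theorem theorem2p2 (R : realType) (k l0 : nat) (l m : nat -> nat)
  (w p q : {poly R[i]}) :
  (1 <= k)%N -> (0 < l0)%N ->
  (forall j, (1 <= j <= k)%N -> (m j <= l j)%N) ->
  (0 < \sum_(1 <= j < k.+1) m j < \sum_(1 <= j < k.+1) l j)%N ->
  w != 0 -> ((size w).-1 < l0)%N ->
  q != 0 -> coprimep p q ->
  ~ (exists c : R[i], p = c *: q) ->
  (forall z : R[i], root q z -> ('X - z%:P) ^+ l0 %| q) ->
  exists z1 z2 : R[i], z1 != z2 /\
    rzero_at (rsubpoly (Pdiff k l0 l m (p, q)) w) z1 /\
    rzero_at (rsubpoly (Pdiff k l0 l m (p, q)) w) z2.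
Proof.
(* [1 <= k] follows from [0 < m']. *)
move=> _ l0_gt0 m_le_l /andP[M_gt0 M_lt_L] w0 deg_w q0 pq_coprime nonconst pole_mult.
have [Phi0|Phi_neq0] := eqVneq (rsubpoly (Pdiff k l0 l m (p, q)) w).1 0.
  by exists 0, 1; split; [rewrite eq_sym oner_eq0 | split; apply: rzero_at_num0].
have nzPhi : rnonzero (rsubpoly (Pdiff k l0 l m (p, q)) w) by apply: rnonzero_Pdiff_sub.
have [z1 [z2 [z12 z1_zero z2_zero]]] := Pdiff_sub_two_zeros l0_gt0 m_le_l M_gt0 M_lt_L w0
  deg_w q0 pq_coprime nonconst pole_mult Phi_neq0.
exists z1, z2; split => //.
by split; [exact: rzero_at_rval nzPhi z1_zero | exact: rzero_at_rval nzPhi z2_zero].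
Qed.
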